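(* If $\mathfrak{p}=\mathfrak{c}$, then every almost disjoint family of size less than $\mathfrak{c}$ can be extended to a Shelah–Stepr\={a}ns MAD family.
   Context: An almost disjoint (AD) family is a family of infinite subsets of $\omega$ with pairwise finite intersections; MAD means maximal AD. $\mathcal{I}(\mathcal{A})$ is the ideal generated by $\mathcal{A}$ and the finite sets. For an ideal $\mathcal{I}$, $(\mathcal{I}^{<\omega})^+$ is the set of $X\subseteq[\omega]^{<\omega}\setminus\{\emptyset\}$ such that every $A\in\mathcal{I}$ is disjoint from some $s\in X$; $\mathcal{I}$ is Shelah–Stepr\={a}ns if for every $X\in(\mathcal{I}^{<\omega})^+$ there is an infinite $Y\subseteq X$ with $\bigcup Y\in\mathcal{I}$; $\mathcal{A}$ is Shelah–Stepr\={a}ns if $\mathcal{I}(\mathcal{A})$ is. $\mathfrak{p}$ is the pseudointersection number, $\mathfrak{c}=2^{\aleph_0}$. *)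

From HB Require Import structures.
From mathcomp Require Import all_boot.
From mathcomp Require Import boolp classical_sets functions cardinality.
Set Implicit Arguments. Unset Strict Implicit. Unset Printing Implicit Defensive.
Local Open Scope classical_set_scope.
Local Open Scope card_scope.

Definition almost_disjoint (A : set (set nat)) : Prop :=
  (forall a, A a -> infinite_set a) /\
  (forall a b, A a -> A b -> a <> b -> finite_set (a `&` b)).

Definition MAD (A : set (set nat)) : Prop :=
  almost_disjoint A /\
  (forall B, almost_disjoint B -> A `<=` B -> B = A).

(* I(A): the ideal generated by A and the finite sets: X is in I(A) iff
   X is contained, up to a finite set, in the union of finitely many
   members of A. *)
Definition idealGen (A : set (set nat)) (X : set nat) : Prop :=
  exists S : set (set nat), finite_set S /\ S `<=` A /\
    finite_set (X `\` \bigcup_(a in S) a).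

(* (I^{<omega})^+ for an ideal I given as a predicate on subsets of omega. *)
Definition fin_pos (I : set (set nat) ) (X : set (set nat)) : Prop :=
  (forall s, X s -> finite_set s /\ s !=set0) /\
  (forall B, I B -> exists2 s, X s & s `&` B = set0).

Definition shelah_steprans_ideal (I : set (set nat)) : Prop :=
  forall X, fin_pos I X ->
    exists Y : set (set nat), Y `<=` X /\ infinite_set Y /\
      I (\bigcup_(s in Y) s).

Definition shelah_steprans (A : set (set nat)) : Prop :=
  shelah_steprans_ideal (idealGen A).

Definition SFIP (F : set (set nat)) : Prop :=
  forall S : set (set nat), finite_set S -> S `<=` F -> S !=set0 ->
    infinite_set (\bigcap_(a in S) a).

Definition pseudointersection (F : set (set nat)) (P : set nat) : Prop :=
  infinite_set P /\ forall a, F a -> finite_set (P `\` a).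

(* Families witnessing the definition of p: subsets of [omega]^omega with SFIP
   and no pseudointersection. *)
Definition p_witness (F : set (set nat)) : Prop :=
  (forall a, F a -> infinite_set a) /\ SFIP F /\
  ~ (exists P, pseudointersection F P).

(* p = c : c = 2^aleph0 = |P(omega)| = |[set: set nat]|.  p is the least
   cardinality of a witness family; p = c says some witness has size <= c
   and every witness has size >= c. *)
Definition p_eq_c : Prop :=
  (exists F, p_witness F /\ F #<= [set: set nat]) /\
  (forall F, p_witness F -> [set: set nat] #<= F).

Definition card_lt_c (A : set (set nat)) : Prop :=
  A #<= [set: set nat] /\ ~ ([set: set nat] #<= A).

(* Under p = c, fix a well-order of the continuum all of whose initial
   segments have size < c, and let stage t of a transfinite recursion handle
   the t-th family X of finite subsets of omega.  If B is the (small) family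
   built so far and X is (I(B)^<omega)^+, then for each b in B, and for each
   finite b, infinitely many s in X are disjoint from b; these sets of s have
   the strong finite intersection property (finitely many b's have a union in
   I(B)), so since there are fewer than p of them they have a
   pseudointersection Y.  Its union is infinite and almost disjoint from B, so
   adding it keeps the family almost disjoint and makes Y a witness for X.
   The final family is therefore Shelah-Steprans, and an almost disjoint
   Shelah-Steprans family is maximal: a set almost disjoint from it would
   yield an infinite family of singletons with union in the ideal. *)

From mathcomp Require Import all_boot.
From mathcomp Require Import boolp classical_sets functions cardinality wochoice.
From Stdlib Require Import Wellfounded.
Set Implicit Arguments. Unset Strict Implicit. Unset Printing Implicit Defensive.
Local Open Scope classical_set_scope.
Local Open Scope card_scope.

Definition small T (A : set T) := ~ ([set: set nat] #<= A).

Lemma continuum_le_injP T (C : set T) :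
  [set: set nat] #<= C <->
  exists2 g : set nat -> T, (forall x, C (g x)) & injective g.
Proof.
split; last first.
  move=> [g gC gi]; have [f] : $|{injfun [set: set nat] >-> C}|.
    by apply/injfunPex; exists g => // x y _ _; apply: gi.
  exact: inj_card_le.
elim/Ppointed: T => T in C *.
  by rewrite empty_eq0 => /card_le0P/seteqP[/(_ set0 I)].
move=> /pcard_leP/injfunPex[g gC gi].
by exists g => [x|x y]; [apply: gC | apply: gi; rewrite in_setE].
Qed.

Lemma small_sub T (A B : set T) : A `<=` B -> small B -> small A.
Proof. by move=> AB Bs CA; apply/Bs/(card_le_trans CA)/subset_card_le. Qed.

Lemma small_image T U (f : T -> U) (A : set T) : small A -> small (f @` A).
Proof. by move=> As CfA; apply/As/(card_le_trans CfA)/card_image_le. Qed.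

Lemma small_preimage T U (f : T -> U) (B : set U) :
  injective f -> small B -> small (f @^-1` B).
Proof.
move=> fi Bs /continuum_le_injP[g gB gi]; apply: Bs.
by apply/continuum_le_injP; exists (f \o g) => // x y /fi/gi.
Qed.

Definition interleave (x y : set nat) : set nat :=
  fun n => if odd n then y n./2 else x n./2.

Lemma interleave_inj x y x' y' :
  interleave x y = interleave x' y' -> x = x' /\ y = y'.
Proof.
move=> e; split; apply: funext => n.
- by have := congr1 (fun z => z n.*2) e; rewrite /interleave odd_double doubleK.
- have := congr1 (fun z => z n.*2.+1) e.
  by rewrite /interleave /= odd_double /= uphalf_double.
Qed.

(* If [g] injects the continuum into [A `|` B], then either every column
   [interleave _ y] meets the preimage of [A], giving an injection of the
   continuum into [A], or some column lies inside the preimage of [B]. *)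
Lemma small_setU T (A B : set T) : small A -> small B -> small (A `|` B).
Proof.
move=> As Bs /continuum_le_injP[g gAB gi].
have [col_hits_A|] := pselect (forall y, exists x, A (g (interleave x y))).
  apply: As; have [x xA] := choice col_hits_A.
  apply/continuum_le_injP; exists (fun y => g (interleave (x y) y)) => // y y'.
  by move=> /gi/interleave_inj[].
move=> /existsNP[y /forallNP col_in_B]; apply: Bs.
apply/continuum_le_injP; exists (fun x => g (interleave x y)) => [x|x x'].
  by case: (gAB (interleave x y)) => // /col_in_B.
by move=> /gi/interleave_inj[].
Qed.

Lemma continuum_uncountable : ~ countable [set: set nat].
Proof.
move=> /continuum_le_injP[f _ fi].
pose D : set nat := fun n => exists2 z, f z = n & ~ z n.
have : D (f D) <-> ~ D (f D).
  by split=> [[z /fi -> //]|nD]; exists D.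
tauto.
Qed.

Lemma countable_small T (A : set T) : countable A -> small A.
Proof. by move=> Actbl CA; apply/continuum_uncountable/(card_le_trans CA). Qed.

Lemma well_founded_minimal T (lt : T -> T -> Prop) (P : T -> Prop) :
  well_founded lt -> (exists x, P x) ->
  exists x, P x /\ forall y, lt y x -> ~ P y.
Proof.
move=> lt_wf [x Px]; apply: contrapT => no_min.
elim/(well_founded_ind lt_wf): x Px.
by move=> x IH Px; apply: no_min; exists x; split=> // y /IH.
Qed.

Lemma exists_well_order (T : eqType) : exists lt : T -> T -> Prop,
  well_founded lt /\ forall x y, x <> y -> lt x y \/ lt y x.
Proof.
have [R R_wo] := well_ordering_principle T.
have R_wo_chain : wo_chain R predT by move=> A _; exact: R_wo.
have R_anti : antisymmetric R.
  by move=> x y; apply: (wo_chain_antisymmetric R_wo_chain).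
pose lt x y := R x y /\ x <> y.
exists lt; split; last first.
  have R_total := wo_chainW R_wo_chain.
  move=> x y xy; have := R_total x y isT isT.
  by case/orP => Rxy; [left|right]; split=> // yx; apply: xy.
move=> x; apply: contrapT => x_nAcc.
have [|m [[] /asboolP m_nAcc m_min] _] := R_wo [pred t | `[< ~ Acc lt t >]].
  by exists x; apply/asboolP.
apply: m_nAcc; constructor => y [Rym ym]; apply: contrapT => y_nAcc.
by apply/ym/R_anti; rewrite Rym m_min //; apply/asboolP.
Qed.

(* Reindexing the first initial segment of size continuum, if there is one,
   along an injection of the continuum into it. *)
Lemma continuum_well_order : exists lt : set nat -> set nat -> Prop,
  [/\ well_founded lt, forall x y, x <> y -> lt x y \/ lt y x
    & forall t, small [set u | lt u t]].
Proof.
have [lt [lt_wf lt_total]] := exists_well_order (set nat).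
have [all_small|] := pselect (forall t, small [set u | lt u t]).
  by exists lt.
move=> /existsNP some_big.
have [t0 [big0 min0]] := well_founded_minimal lt_wf some_big.
have /continuum_le_injP[h h_lt hi] : [set: set nat] #<= [set u | lt u t0].
  exact: contrapT.
exists (fun x y => lt (h x) (h y)); split.
- exact: wf_inverse_image.
- by move=> x y /(contra_not (@hi x y)) /lt_total.
- move=> t; apply: (small_preimage (B := [set v | lt v (h t)])) => //.
  by apply: contrapT; apply: min0 (h_lt t).
Qed.

Definition almost_disjoint_from (A : set (set nat)) (x : set nat) :=
  forall a, A a -> finite_set (x `&` a).

Section GeneratedIdeal.
Variable A : set (set nat).

Lemma idealGen_mem a : A a -> idealGen A a.
Proof.
move=> Aa; exists [set a]; split; first exact: finite_set1.
by split=> [_ ->|] //; rewrite bigcup_set1 setDv; exact: finite_set0.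
Qed.

Lemma idealGen_finite a : finite_set a -> idealGen A a.
Proof.
move=> fa; exists set0; split; first exact: finite_set0.
by split=> //; rewrite bigcup_set0 setD0.
Qed.

Lemma idealGen_bigcup I (S : set I) (F : I -> set nat) :
  finite_set S -> (forall i, S i -> idealGen A (F i)) ->
  idealGen A (\bigcup_(i in S) F i).
Proof.
move=> S_fin S_ideal.
have G_ex i : exists G : set (set nat), S i ->
    [/\ finite_set G, G `<=` A & finite_set (F i `\` \bigcup_(a in G) a)].
  have [/S_ideal[G [? [? ?]]]|nSi] := pselect (S i); first by exists G.
  by exists set0.
have [G G_spec] := choice G_ex.
exists (\bigcup_(i in S) G i); split.
  by apply: bigcup_finite => // i /G_spec[].
split; first by move=> a [i /G_spec[_ GA _] /GA].
apply: (sub_finite_set (B := \bigcup_(i in S) (F i `\` \bigcup_(a in G i) a))).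
  move=> x [[i Si Fi_x] xG]; exists i => //; split=> // -[a Gia ax].
  by apply: xG; exists a => //; exists i.
by apply: bigcup_finite => // i /G_spec[].
Qed.

Lemma idealGen_subset A' : A `<=` A' -> idealGen A `<=` idealGen A'.
Proof.
by move=> AA' a [S [S_fin [SA aS]]]; exists S; split=> //; split=> // b /SA/AA'.
Qed.

Lemma idealGen_almost_disjoint x E :
  almost_disjoint_from A x -> idealGen A E -> finite_set (x `&` E).
Proof.
move=> x_ad [S [S_fin [SA ES]]].
apply: (sub_finite_set
  (B := (E `\` \bigcup_(a in S) a) `|` \bigcup_(a in S) (x `&` a))).
  move=> n [xn En]; have [[a Sa an]|nS] := pselect ((\bigcup_(a in S) a) n).
    by right; exists a.
  by left.
by rewrite finite_setU; split=> //; apply: bigcup_finite => // a /SA/x_ad.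
Qed.

Lemma fin_pos_avoid X C : fin_pos (idealGen A) X -> idealGen A C ->
  infinite_set [set s | X s /\ s `&` C = set0].
Proof.
move=> [X_fin X_pos] C_ideal W_fin; set W := [set s | _] in W_fin.
have /X_pos[s Xs] : idealGen A (\bigcup_(u in C |` W) u).
  apply: idealGen_bigcup => [|u [-> //|[Xu _]]].
    by rewrite finite_setU; split=> //; exact: finite_set1.
  by apply: idealGen_finite; case: (X_fin u Xu).
rewrite bigcup_setU1 setIUr setU_eq0 => -[sC sW].
have [_ [n sn]] := X_fin s Xs.
have : (s `&` \bigcup_(u in W) u) n by split=> //; exists s.
by rewrite sW.
Qed.

End GeneratedIdeal.

Lemma fin_pos_subset (I J X : set (set nat)) :
  I `<=` J -> fin_pos J X -> fin_pos I X.
Proof. by move=> IJ [X_fin X_pos]; split=> // B /IJ/X_pos. Qed.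

(* Adding [a] to [A] keeps it almost disjoint and makes [Y] a witness of the
   Shelah-Steprans property for [X]. *)
Definition ss_witness (A X : set (set nat)) (a : set nat) :=
  [/\ infinite_set a, almost_disjoint_from A a &
      exists Y, [/\ Y `<=` X, infinite_set Y & a = \bigcup_(s in Y) s]].

Lemma finite_set_code : exists code : set nat -> nat,
  {in [set s : set nat | finite_set s] &, injective code}.
Proof.
have /pcard_injP[code code_inj] := countable_finite_subset (countableP [set: nat]).
by exists code => s s'; rewrite !in_setE => fs fs'; apply: code_inj; rewrite in_setE.
Qed.

Definition fin_code : set nat -> nat := projT1 (cid finite_set_code).

Lemma fin_code_inj : {in [set s | finite_set s] &, injective fin_code}.
Proof. exact: projT2 (cid finite_set_code). Qed.

Section Extension.
Hypothesis p_large : forall F, p_witness F -> [set: set nat] #<= F.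

Lemma small_SFIP_pseudointersection F : (forall a, F a -> infinite_set a) ->
  SFIP F -> small F -> exists P, pseudointersection F P.
Proof.
move=> F_inf F_SFIP F_small; apply: contrapT => noP.
by apply/F_small/p_large; split.
Qed.

Variables (A X : set (set nat)).
Hypotheses (A_small : small A) (X_pos : fin_pos (idealGen A) X).

Let X_finite s : X s -> finite_set s.
Proof. by case: X_pos => X_fin _ /X_fin[]. Qed.

Let avoid (C : set nat) := [set s | X s /\ s `&` C = set0].
Let D := A `|` [set b | finite_set b].

Let D_ideal b : D b -> idealGen A b.
Proof. by case=> [/idealGen_mem|/idealGen_finite]. Qed.

Let finite_codes W : W `<=` X -> finite_set (fin_code @` W) -> finite_set W.
Proof.
move=> WX; rewrite (eq_finite_set (inj_card_eq _)) // => s s'.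
by rewrite !in_setE => /WX/X_finite fs /WX/X_finite fs'; apply: fin_code_inj;
  rewrite in_setE.
Qed.

Let avoid_codes_infinite C : idealGen A C -> infinite_set (fin_code @` avoid C).
Proof.
move=> C_ideal /finite_codes W_fin; apply: (fin_pos_avoid X_pos C_ideal).
by apply: W_fin => s [].
Qed.

Let G := [set fin_code @` avoid b | b in D].

Let G_small : small G.
Proof.
apply/small_image/small_setU => //; apply: countable_small.
apply: card_le_trans (countable_finite_subset (countableP [set: nat])).
by apply: subset_card_le => b fb.
Qed.

(* A finite subfamily of [G] contains the codes of the [s] avoiding the union
   of the corresponding members of [D], which is in the ideal. *)
Let G_SFIP : SFIP G.
Proof.
move=> S S_fin SG _.
have g_ex c : exists b, S c -> D b /\ fin_code @` avoid b = c.
  by have [/SG[b Db <-]|] := pselect (S c); [exists b | exists set0].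
have [g g_spec] := choice g_ex.
have C_ideal : idealGen A (\bigcup_(c in S) g c).
  by apply: idealGen_bigcup => // c /g_spec[/D_ideal].
apply: sub_infinite_set (avoid_codes_infinite C_ideal).
move=> _ [s [Xs sC] <-] c Sc; have [_ <-] := g_spec c Sc.
exists s => //; split=> //; apply/seteqP; split=> // n [sn gn].
by rewrite -sC; split=> //; exists c.
Qed.

Section Pseudointersection.
Variable P : set nat.
Hypothesis P_pseudo : pseudointersection G P.

Let Y := [set s | X s /\ P (fin_code s)].

Let P_almost_codes b : D b -> finite_set (P `\` fin_code @` avoid b).
Proof. by move=> Db; case: P_pseudo => _; apply; exists b. Qed.

Let Y_almost_avoids b : D b -> finite_set [set s | Y s /\ s `&` b !=set0].
Proof.
move=> Db; apply: finite_codes => [s [[]] //|].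
apply: sub_finite_set (P_almost_codes Db) => _ [s [[Xs Ps] sb] <-].
split=> // -[s' [Xs' s'b] /fin_code_inj eq_s]; move: sb.
by rewrite -eq_s ?s'b ?in_setE; [case | exact: X_finite | exact: X_finite].
Qed.

Let Y_infinite : infinite_set Y.
Proof.
move=> Y_fin; case: P_pseudo => P_inf _; apply: P_inf.
apply: (sub_finite_set (B := (P `\` fin_code @` avoid set0) `|` fin_code @` Y)).
  move=> n Pn; have [[s [Xs _] sn]|] := pselect ((fin_code @` avoid set0) n).
    by right; exists s; rewrite // /Y /= sn.
  by left.
rewrite finite_setU; split; last exact: finite_image.
by apply: P_almost_codes; right; exact: finite_set0.
Qed.

Let bigcup_Y_meet b :
  (\bigcup_(s in Y) s) `&` b `<=` \bigcup_(s in [set s | Y s /\ s `&` b !=set0]) s.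
Proof. by move=> n [[s Ys sn] bn]; exists s => //; split=> //; exists n. Qed.

Let bigcup_Y_finite b : D b -> finite_set ((\bigcup_(s in Y) s) `&` b).
Proof.
move=> Db; apply: (sub_finite_set (@bigcup_Y_meet b)).
by apply: bigcup_finite (Y_almost_avoids Db) _ => s [[/X_finite]].
Qed.

(* Every [s] in [Y] is nonempty, so if [\bigcup_(s in Y) s] were finite, it
   would be a member of [D] met by every [s] in the infinite family [Y]. *)
Lemma pseudointersection_ss_witness : exists a, ss_witness A X a.
Proof.
exists (\bigcup_(s in Y) s); split; last by exists Y; split=> // s [].
- move=> U_fin; apply: Y_infinite.
  apply: sub_finite_set (Y_almost_avoids (or_intror U_fin)) => s Ys.
  split=> //; have [_ [n sn]] := X_pos.1 s Ys.1.
  by exists n; split=> //; exists s.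
- by move=> b Ab; apply: bigcup_Y_finite; left.
Qed.

End Pseudointersection.

Lemma small_ss_witness : exists a, ss_witness A X a.
Proof.
have [|P] := small_SFIP_pseudointersection _ G_SFIP G_small.
  by move=> _ [b /D_ideal C_ideal <-]; apply: avoid_codes_infinite.
exact: pseudointersection_ss_witness.
Qed.

End Extension.

Lemma shelah_steprans_MAD B : almost_disjoint B -> shelah_steprans B -> MAD B.
Proof.
move=> B_ad B_ss; split=> // C [C_inf C_ad] BC.
apply/seteqP; split=> // x Cx; apply: contrapT => nBx.
have x_ad : almost_disjoint_from B x.
  move=> b Bb; apply: C_ad => //; first exact: BC.
  by move=> xb; apply: nBx; rewrite xb.
pose X := [set [set n] | n in x].
have X_pos : fin_pos (idealGen B) X.
  split=> [_ [n _ <-]|E E_ideal]; first by split; [exact: finite_set1 | exists n].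
  have /infinite_setN0[n [xn nEn]] : infinite_set (x `\` E).
    move=> xE_fin; apply: (C_inf x Cx); rewrite -(setUIDK x E) finite_setU.
    by split=> //; exact: idealGen_almost_disjoint x_ad E_ideal.
  by exists [set n]; [exists n | apply/seteqP; split=> // m [-> En]].
have [Y [YX [Y_inf Y_ideal]]] := B_ss X X_pos.
have Yx : \bigcup_(s in Y) s `<=` x by move=> n [s /YX[m xm <-] ->].
have := idealGen_almost_disjoint x_ad Y_ideal; rewrite setIidr // => U_fin.
apply/Y_inf/(sub_finite_set _ (finite_image (fun n => [set n]) U_fin)).
move=> s Ys; have [n _ sn] := YX s Ys; exists n => //.
by exists s => //; rewrite -sn.
Qed.

Definition pick_ss_witness (B X : set (set nat)) : option (set nat) :=
  if pselect (exists a, ss_witness B X a) is left h then Some (projT1 (cid h))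
  else None.

Lemma pick_ss_witness_correct B X a :
  pick_ss_witness B X = Some a -> ss_witness B X a.
Proof.
by rewrite /pick_ss_witness; case: pselect => // h [<-]; exact: projT2 (cid h).
Qed.

Lemma pick_ss_witness_complete B X :
  (exists a, ss_witness B X a) -> exists a, pick_ss_witness B X = Some a.
Proof. by rewrite /pick_ss_witness; case: pselect => // h _; eexists. Qed.

Definition decode (t : set nat) : set (set nat) :=
  [set s | finite_set s /\ t (fin_code s)].

Lemma decode_code X :
  (forall s, X s -> finite_set s) -> decode (fin_code @` X) = X.
Proof.
move=> X_fin; apply/seteqP; split=> [s [s_fin [s' Xs' eq_code]]|s Xs].
  suff -> : s = s' by [].
  by apply: fin_code_inj; rewrite ?in_setE //; exact: X_fin.
by split; [exact: X_fin | exists s].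
Qed.

Section Construction.
Variables (A : set (set nat)) (lt : set nat -> set nat -> Prop).
Hypothesis lt_wf : well_founded lt.

Let step t (prev : forall u, lt u t -> option (set nat)) : option (set nat) :=
  pick_ss_witness
    (A `|` [set a | exists u (ltut : lt u t), prev u ltut = Some a]) (decode t).

Definition added : set nat -> option (set nat) :=
  Fix lt_wf (fun _ => option (set nat)) step.

Definition added_before t := A `|` [set a | exists2 u, lt u t & added u = Some a].

Definition extension := A `|` [set a | exists u, added u = Some a].

Lemma addedE t : added t = pick_ss_witness (added_before t) (decode t).
Proof.
rewrite /added Fix_eq => [|u f g fg]; last first.
  by congr pick_ss_witness; congr (_ `|` _); apply/seteqP; split=> a [v [ltvu]];
    [rewrite fg | rewrite -fg]; exists v, ltvu.
rewrite /step; congr pick_ss_witness; congr (_ `|` _); apply/seteqP.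
by split=> a; [case=> u [ltut]; exists u | case=> u ltut; exists u, ltut].
Qed.

Lemma added_ss_witness t a :
  added t = Some a -> ss_witness (added_before t) (decode t) a.
Proof. by rewrite addedE => /pick_ss_witness_correct. Qed.

Lemma added_before_sub t : added_before t `<=` extension.
Proof. by move=> a [Aa|[u _ ua]]; [left | right; exists u]. Qed.

Hypothesis lt_total : forall x y, x <> y -> lt x y \/ lt y x.

Lemma extension_almost_disjoint : almost_disjoint A -> almost_disjoint extension.
Proof.
move=> [A_inf A_ad].
have added_ad u a b : added u = Some a -> added_before u b -> finite_set (a `&` b).
  by move=> /added_ss_witness[_ a_ad _] /a_ad.
split=> [a [/A_inf //|[u /added_ss_witness[]]] //|].
move=> a b [Aa|[u ua]] [Ab|[v vb]] ab; first exact: A_ad.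
- by rewrite setIC; apply: (added_ad _ _ _ vb); left.
- by apply: (added_ad _ _ _ ua); left.
have [uv|/lt_total[ltuv|ltvu]] := pselect (u = v).
- by move: ua; rewrite uv vb => -[ba]; case: ab.
- by rewrite setIC; apply: (added_ad _ _ _ vb); right; exists u.
- by apply: (added_ad _ _ _ ua); right; exists v.
Qed.

Hypothesis p_large : forall F, p_witness F -> [set: set nat] #<= F.
Hypotheses (A_small : small A) (lt_small : forall t, small [set u | lt u t]).

Lemma added_before_small t : small (added_before t).
Proof.
apply: (small_sub (B := A `|` (odflt set0 \o added) @` [set u | lt u t])).
  by move=> a [Aa|[u ltut ua]]; [left | right; exists u => //=; rewrite ua].
exact/small_setU/small_image.
Qed.

(* The stage [fin_code @` X] of the recursion was offered [X]. *)
Lemma extension_shelah_steprans : shelah_steprans extension.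
Proof.
move=> X X_pos; set t := fin_code @` X.
have X_t : decode t = X by apply: decode_code => s /X_pos.1[].
have X_pos_t : fin_pos (idealGen (added_before t)) (decode t).
  rewrite X_t; apply: fin_pos_subset X_pos.
  exact/idealGen_subset/added_before_sub.
have t_small := added_before_small (t := t).
have [a ta] := pick_ss_witness_complete (small_ss_witness p_large t_small X_pos_t).
rewrite -addedE in ta; have [_ _ [Y [YX Y_inf a_eq]]] := added_ss_witness ta.
exists Y; split; first by rewrite -X_t.
by split=> //; rewrite -a_eq; apply: idealGen_mem; right; exists t.
Qed.

End Construction.

Theorem mainTheorem9 :
  p_eq_c ->
  forall A : set (set nat), almost_disjoint A -> card_lt_c A ->
  exists B : set (set nat), A `<=` B /\ MAD B /\ shelah_steprans B.
Proof.
move=> [_ p_large] A A_ad [_ A_small].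
have [lt [lt_wf lt_total lt_small]] := continuum_well_order.
exists (extension A lt_wf); split; first by move=> a; left.
have ext_ss := extension_shelah_steprans (lt_wf := lt_wf) p_large A_small lt_small.
split=> //; apply: shelah_steprans_MAD ext_ss.
exact: extension_almost_disjoint lt_total A_ad.
Qed.
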